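(* Let $V$ be a real Hilbert space, $V_{\mathcal T}\subset V$ a finite-dimensional subspace, and let $a,a_\delta:V\times V\to\mathbb R$, $a_{\mathcal T}:V_{\mathcal T}\times V_{\mathcal T}\to\mathbb R$, $f\in V^*$, $f_{\mathcal T}$ a linear functional on $V_{\mathcal T}$, and $j:V\to\mathbb R$ be as described in the context. Let $u,z\in V$ satisfy $$a(u;v)+a_\delta(u;v)=\langle f,v\rangle\quad\forall v\in V,$$ $$a'(u;w,z)+a_\delta'(u;w,z)=j'(u;w)\quad\forall w\in V.$$ Let $u_{\mathcal T m},z_{\mathcal T m}\in V_{\mathcal T}$ satisfy $$a_{\mathcal T}(u_{\mathcal T m};v)=\langle f_{\mathcal T},v\rangle\quad\forall v\in V_{\mathcal T},$$ $$a'(u_{\mathcal T m};w,z_{\mathcal T m})=j'(u_{\mathcal T m};w)\quad\forall w\in V_{\mathcal T}.$$ Let $i_{\mathcal T}:V\to V_{\mathcal T}$ be any map (an interpolation operator). Put $$e=(e_u,e_z):=(u-u_{\mathcal T m},\,z-z_{\mathcal T m}),\qquad x:=(u,z),\qquad x_{\mathcal T m}:=(u_{\mathcal T m},z_{\mathcal T m}).$$ Assume the differentiability hypotheses stated in the context. Then $$\begin{aligned} j(u)-j(u_{\mathcal T m}) ={}& -a_\delta(u_{\mathcal T m};z_{\mathcal T m})\\ &+\langle f,z_{\mathcal T m}\rangle-\langle f_{\mathcal T},z_{\mathcal T m}\rangle-a(u_{\mathcal T m};z_{\mathcal T m})+a_{\mathcal T}(u_{\mathcal T m};z_{\mathcal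 T m})\\ &+\tfrac12\big[\varrho(u_{\mathcal T m};z-i_{\mathcal T}z)+\varrho^*(u_{\mathcal T m};z_{\mathcal T m},u-i_{\mathcal T}u)\big]\\ &-\tfrac12\big[a_\delta(u_{\mathcal T m};e_z)+a_\delta'(u_{\mathcal T m};e_u,z_{\mathcal T m})\big]\\ &-\tfrac12\varrho(u_{\mathcal T m};z_{\mathcal T m}-i_{\mathcal T}z)-\tfrac12 R, \end{aligned}$$ where $$R:=\int_0^1\sigma(1-\sigma)\,L'''(x_{\mathcal T m}+\sigma e;e,e,e)\,d\sigma .$$
   Context: Setting and data: - $V$ is a real Hilbert space, $V_{\mathcal T}\subset V$ is a finite-dimensional subspace, and $X:=V\times V$. - $a,a_\delta:V\times V\to\mathbb R$ are linear in the second argument and possibly nonlinear in the first. The value $a(w;v)$ denotes $a$ evaluated at $(w,v)$, and similarly for $a_\delta$. - $f\in V^*$, with $\langle f,v\rangle$ its value at $v$. - $j:V\to\mathbb R$ is an output functional. - $a_{\mathcal T}:V_{\mathcal T}\times V_{\mathcal T}\to\mathbb R$ is linear in the second argument. It need not equal the restriction of $a$. - $f_{\mathcal T}$ is a linear functional on $V_{\mathcal T}$. It need not equal the restriction of $f$. Derivatives: - $a'(u;w,v):=\lim_{\epsilon\to0}\epsilon^{-1}[a(u+\epsilon w;v)-a(u;v)]$ denotes the Gâteaux (directional) derivative in the first argument. It is assumed to exist and be linear in $w$ and $v$. - $a_\delta'$ and $j'(u;w)$ are defined analogously and satisfy the same assumptions. The functional $L$: on $X$ define $$L(x):=j(u)+\langle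 f,z\rangle-a(u;z)-a_\delta(u;z),\qquad x=(u,z).$$ Its directional derivative at $x$ in direction $y=(w,v)\in X$ is $$L'(x;y)=j'(u;w)-a'(u;w,z)-a_\delta'(u;w,z)+\langle f,v\rangle-a(u;v)-a_\delta(u;v).$$ Residuals: for $v,w\in V$, $$\varrho(u_{\mathcal T m};v):=\langle f,v\rangle-a(u_{\mathcal T m};v),$$ $$\varrho^*(u_{\mathcal T m};z_{\mathcal T m},w):=j'(u_{\mathcal T m};w)-a'(u_{\mathcal T m};w,z_{\mathcal T m}).$$ Differentiability hypothesis: the function $\varphi(\sigma):=L(x_{\mathcal T m}+\sigma e)$ is three times continuously differentiable on $[0,1]$, with $\varphi'(\sigma)=L'(x_{\mathcal T m}+\sigma e;e)$. We write $L'''(x_{\mathcal T m}+\sigma e;e,e,e):=\varphi'''(\sigma)$. *)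

From Stdlib Require Import Reals.
Open Scope R_scope.

Record HilbertSpace := {
  hcar :> Type;
  vadd : hcar -> hcar -> hcar;
  vscal : R -> hcar -> hcar;
  vzero : hcar;
  vopp : hcar -> hcar;
  inner : hcar -> hcar -> R;
  vadd_assoc : forall x y z, vadd x (vadd y z) = vadd (vadd x y) z;
  vadd_comm : forall x y, vadd x y = vadd y x;
  vadd_0l : forall x, vadd vzero x = x;
  vadd_oppr : forall x, vadd x (vopp x) = vzero;
  vscal_addr : forall r x y, vscal r (vadd x y) = vadd (vscal r x) (vscal r y);
  vscal_addl : forall r s x, vscal (r + s) x = vadd (vscal r x) (vscal s x);
  vscal_mul : forall r s x, vscal (r * s) x = vscal r (vscal s x);
  vscal_1 : forall x, vscal 1 x = x;
  inner_sym : forall x y, inner x y = inner y x;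
  inner_addl : forall x y z, inner (vadd x y) z = inner x z + inner y z;
  inner_scall : forall r x y, inner (vscal r x) y = r * inner x y;
  inner_pos : forall x, 0 <= inner x x;
  inner_def : forall x, inner x x = 0 -> x = vzero;
  complete : forall s : nat -> hcar,
    (forall eps, 0 < eps -> exists N, forall n m, (N <= n)%nat -> (N <= m)%nat ->
        sqrt (inner (vadd (s n) (vopp (s m))) (vadd (s n) (vopp (s m)))) < eps) ->
    exists l, forall eps, 0 < eps -> exists N, forall n, (N <= n)%nat ->
        sqrt (inner (vadd (s n) (vopp l)) (vadd (s n) (vopp l))) < eps
}.

Arguments vadd {h}. Arguments vscal {h}. Arguments vzero {h}.
Arguments vopp {h}. Arguments inner {h}.

Definition vsub {V : HilbertSpace} (x y : V) : V := vadd x (vopp y).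
Definition vnorm {V : HilbertSpace} (x : V) : R := sqrt (inner x x).

Definition is_linear {V : HilbertSpace} (g : V -> R) : Prop :=
  (forall x y, g (vadd x y) = g x + g y) /\ (forall r x, g (vscal r x) = r * g x).

Definition in_dual {V : HilbertSpace} (g : V -> R) : Prop :=
  is_linear g /\ exists C, forall v, Rabs (g v) <= C * vnorm v.

Fixpoint lincomb {V : HilbertSpace} (n : nat) (c : nat -> R) (b : nat -> V) : V :=
  match n with
  | O => vzero
  | S k => vadd (lincomb k c b) (vscal (c k) (b k))
  end.

Definition fin_dim_subspace {V : HilbertSpace} (S : V -> Prop) : Prop :=
  S vzero /\
  (forall x y, S x -> S y -> S (vadd x y)) /\
  (forall r x, S x -> S (vscal r x)) /\
  exists (n : nat) (b : nat -> V), forall x, S x -> exists c, x = lincomb n c b.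

(** Linear functional on the subspace S (only values on S matter). *)
Definition is_linear_on {V : HilbertSpace} (S : V -> Prop) (g : V -> R) : Prop :=
  (forall x y, S x -> S y -> g (vadd x y) = g x + g y) /\
  (forall r x, S x -> g (vscal r x) = r * g x).

Definition gateaux {V : HilbertSpace} (F : V -> R) (u w : V) (d : R) : Prop :=
  derivable_pt_lim (fun eps => F (vadd u (vscal eps w))) 0 d.

Definition deriv_on01 (g g' : R -> R) : Prop :=
  forall s, 0 <= s <= 1 -> forall eps, 0 < eps -> exists delta, 0 < delta /\
    forall h, h <> 0 -> Rabs h < delta -> 0 <= s + h <= 1 ->
      Rabs ((g (s + h) - g s) / h - g' s) < eps.

Definition cont_on01 (g : R -> R) : Prop :=
  forall s, 0 <= s <= 1 -> forall eps, 0 < eps -> exists delta, 0 < delta /\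
    forall t, 0 <= t <= 1 -> Rabs (t - s) < delta -> Rabs (g t - g s) < eps.

Definition Lfun {V : HilbertSpace} (j : V -> R) (f : V -> R) (a ad : V -> V -> R)
  (u z : V) : R := j u + f z - a u z - ad u z.

Definition Lprime {V : HilbertSpace} (j' : V -> V -> R) (f : V -> R)
  (a ad : V -> V -> R) (a' ad' : V -> V -> V -> R) (u z w v : V) : R :=
  j' u w - a' u w z - ad' u w z + f v - a u v - ad u v.

Definition rho {V : HilbertSpace} (f : V -> R) (a : V -> V -> R) (uh v : V) : R :=
  f v - a uh v.
Definition rhostar {V : HilbertSpace} (j' : V -> V -> R) (a' : V -> V -> V -> R)
  (uh zh w : V) : R := j' uh w - a' uh w zh.

(** The identity is an exact algebraic rearrangement of one scalar fact: the
    trapezoidal rule with its Peano remainder.  If [P' = Q], [Q' = p2],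
    [p2' = p3] on [[0,1]] (one-sided at the endpoints) and [p3] is continuous,
    then
      P 1 - P 0 = 1/2 (Q 0 + Q 1) - 1/2 \int_0^1 s (1 - s) p3 s ds,
    because [G s = s(1-s) p2 s - (1-2s) Q s - 2 P s] satisfies
    [G' s = s (1-s) p3 s].  To apply the fundamental theorem of calculus, which
    needs two-sided derivatives, P, Q and p2 are first extended beyond [[0,1]]
    by their Taylor polynomials at the endpoints; the gluing is justified by
    one-sided difference quotients.

    The theorem then applies this to [phi s = L (x_Tm + s e)]: at [s = 1] the
    point [x = (u, z)] is stationary for [L], so [L'(x; e) = 0] and [L(x) = j u];
    at [s = 0], [L'(x_Tm; e)] splits into the residuals [rho], [rho*] and the
    [a_delta] terms, and the Galerkin property of [z_Tm] lets the interpolant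
    [i_T] be inserted into the residuals. *)

From Coquelicot Require Import Coquelicot.
From Stdlib Require Import Reals Lra.
Open Scope R_scope.

(** One-sided limits of difference quotients; [deriv_on01] only provides
    these at the endpoints of [[0,1]]. *)
Definition right_deriv (H : R -> R) (x l : R) : Prop :=
  forall eps, 0 < eps -> exists d, 0 < d /\
    forall h, 0 < h < d -> Rabs ((H (x + h) - H x) / h - l) < eps.

Definition left_deriv (H : R -> R) (x l : R) : Prop :=
  forall eps, 0 < eps -> exists d, 0 < d /\
    forall h, - d < h < 0 -> Rabs ((H (x + h) - H x) / h - l) < eps.

Lemma derivable_of_sides H x l :
  right_deriv H x l -> left_deriv H x l -> derivable_pt_lim H x l.
Proof.
  intros hr hl eps He.
  destruct (hr eps He) as [d1 [Hd1 H1]], (hl eps He) as [d2 [Hd2 H2]].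
  exists (mkposreal _ (Rmin_pos _ _ Hd1 Hd2)); simpl; intros h Hh0 Hh.
  pose proof (Rmin_l d1 d2); pose proof (Rmin_r d1 d2).
  destruct (Rabs_def2 _ _ Hh).
  destruct (Rdichotomy _ _ Hh0); [apply H2 | apply H1]; lra.
Qed.

Lemma sides_of_derivable H x l :
  derivable_pt_lim H x l -> right_deriv H x l /\ left_deriv H x l.
Proof.
  intros hd; split; intros eps He; destruct (hd eps He) as [d Hd];
    exists d; split; try apply cond_pos;
    intros h Hh; apply Hd; try lra; apply Rabs_def1; lra.
Qed.

Lemma right_of_deriv_on01 F F' x :
  deriv_on01 F F' -> 0 <= x < 1 -> right_deriv F x (F' x).
Proof.
  intros hF Hx eps He.
  destruct (hF x ltac:(lra) eps He) as [d [Hd H]].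
  exists (Rmin d (1 - x)); split; [apply Rmin_pos; lra|].
  intros h Hh; pose proof (Rmin_l d (1 - x)); pose proof (Rmin_r d (1 - x)).
  apply H; try lra; apply Rabs_def1; lra.
Qed.

Lemma left_of_deriv_on01 F F' x :
  deriv_on01 F F' -> 0 < x <= 1 -> left_deriv F x (F' x).
Proof.
  intros hF Hx eps He.
  destruct (hF x ltac:(lra) eps He) as [d [Hd H]].
  exists (Rmin d x); split; [apply Rmin_pos; lra|].
  intros h Hh; pose proof (Rmin_l d x); pose proof (Rmin_r d x).
  apply H; try lra; apply Rabs_def1; lra.
Qed.

Lemma right_deriv_ext K H x l r : 0 < r ->
  (forall t, x <= t < x + r -> H t = K t) -> right_deriv K x l -> right_deriv H x l.
Proof.
  intros Hr Heq hK eps He; destruct (hK eps He) as [d [Hd Hk]].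
  exists (Rmin d r); split; [apply Rmin_pos; lra|].
  intros h Hh; pose proof (Rmin_l d r); pose proof (Rmin_r d r).
  rewrite (Heq (x + h)), (Heq x) by lra; apply Hk; lra.
Qed.

Lemma left_deriv_ext K H x l r : 0 < r ->
  (forall t, x - r < t <= x -> H t = K t) -> left_deriv K x l -> left_deriv H x l.
Proof.
  intros Hr Heq hK eps He; destruct (hK eps He) as [d [Hd Hk]].
  exists (Rmin d r); split; [apply Rmin_pos; lra|].
  intros h Hh; pose proof (Rmin_l d r); pose proof (Rmin_r d r).
  rewrite (Heq (x + h)), (Heq x) by lra; apply Hk; lra.
Qed.

Definition ext (F L Rt : R -> R) (x : R) : R :=
  if Rlt_dec x 0 then L x else if Rlt_dec 1 x then Rt x else F x.

Lemma ext_le0 F L Rt t : L 0 = F 0 -> t <= 0 -> ext F L Rt t = L t.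
Proof.
  intros e0 Ht; unfold ext; destruct (Rlt_dec t 0); [easy|].
  destruct (Rlt_dec 1 t); [lra|]. now replace t with 0 by lra.
Qed.

Lemma ext_mid F L Rt t : 0 <= t <= 1 -> ext F L Rt t = F t.
Proof. intros Ht; unfold ext; destruct (Rlt_dec t 0), (Rlt_dec 1 t); lra || easy. Qed.

Lemma ext_ge1 F L Rt t : Rt 1 = F 1 -> 1 <= t -> ext F L Rt t = Rt t.
Proof.
  intros e1 Ht; unfold ext; destruct (Rlt_dec t 0); [lra|].
  destruct (Rlt_dec 1 t); [easy|]. now replace t with 1 by lra.
Qed.

Lemma glue_deriv F F' L L' Rt Rt' :
  deriv_on01 F F' -> (forall x, derivable_pt_lim L x (L' x)) ->
  (forall x, derivable_pt_lim Rt x (Rt' x)) ->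
  L 0 = F 0 -> L' 0 = F' 0 -> Rt 1 = F 1 -> Rt' 1 = F' 1 ->
  forall x, derivable_pt_lim (ext F L Rt) x (ext F' L' Rt' x).
Proof.
  intros hF hL hR e0 e0' e1 e1' x; apply derivable_of_sides.
  - destruct (Rlt_le_dec x 0) as [Hx|Hx]; [|destruct (Rlt_le_dec x 1) as [Hx1|Hx1]].
    + rewrite ext_le0 by lra.
      apply (right_deriv_ext L _ _ _ (- x)); [lra| |apply sides_of_derivable, hL].
      intros t Ht; apply ext_le0; lra.
    + rewrite ext_mid by lra.
      apply (right_deriv_ext F _ _ _ (1 - x)); [lra| |now apply right_of_deriv_on01].
      intros t Ht; apply ext_mid; lra.
    + rewrite ext_ge1 by lra.
      apply (right_deriv_ext Rt _ _ _ 1); [lra| |apply sides_of_derivable, hR].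
      intros t Ht; apply ext_ge1; lra.
  - destruct (Rle_lt_dec x 0) as [Hx|Hx]; [|destruct (Rle_lt_dec x 1) as [Hx1|Hx1]].
    + rewrite ext_le0 by lra.
      apply (left_deriv_ext L _ _ _ 1); [lra| |apply sides_of_derivable, hL].
      intros t Ht; apply ext_le0; lra.
    + rewrite ext_mid by lra.
      apply (left_deriv_ext F _ _ _ x); [lra| |now apply left_of_deriv_on01].
      intros t Ht; apply ext_mid; lra.
    + rewrite ext_ge1 by lra.
      apply (left_deriv_ext Rt _ _ _ (x - 1)); [lra| |apply sides_of_derivable, hR].
      intros t Ht; apply ext_ge1; lra.
Qed.

Definition poly_tail (c1 c2 c3 t : R) : R := c1 * t + c2 * t ^ 2 / 2 + c3 * t ^ 3 / 6.

Lemma poly_tail_deriv c c1 c2 c3 a x :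
  derivable_pt_lim (fun s => c + poly_tail c1 c2 c3 (s - a)) x
                   (c1 + poly_tail c2 c3 0 (x - a)).
Proof. apply is_derive_Reals; unfold poly_tail; auto_derive; [easy | field]. Qed.

Definition taylor_ext (F d1 d2 d3 : R -> R) : R -> R :=
  ext F (fun s => F 0 + poly_tail (d1 0) (d2 0) (d3 0) (s - 0))
        (fun s => F 1 + poly_tail (d1 1) (d2 1) (d3 1) (s - 1)).

Lemma taylor_ext_deriv F d1 d2 d3 : deriv_on01 F d1 ->
  forall x, derivable_pt_lim (taylor_ext F d1 d2 d3) x
                             (taylor_ext d1 d2 d3 (fun _ => 0) x).
Proof.
  intros hF; apply glue_deriv; try (intro; apply poly_tail_deriv); auto;
    unfold poly_tail; field.
Qed.

Lemma taylor_ext_01 F d1 d2 d3 t : 0 <= t <= 1 -> taylor_ext F d1 d2 d3 t = F t.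
Proof. apply ext_mid. Qed.

Definition clamp (x : R) : R := Rmax 0 (Rmin 1 x).

Lemma clamp_in x : 0 <= clamp x <= 1.
Proof. unfold clamp, Rmax, Rmin; repeat destruct (Rle_dec _ _); lra. Qed.

Lemma clamp_lipschitz x y : Rabs (clamp y - clamp x) <= Rabs (y - x).
Proof.
  unfold clamp, Rmax, Rmin, Rabs.
  repeat destruct (Rle_dec _ _); repeat destruct (Rcase_abs _); lra.
Qed.

Lemma clamp_continuous g : cont_on01 g -> forall x, continuity_pt (fun s => g (clamp s)) x.
Proof.
  intros hg x eps He.
  destruct (hg (clamp x) (clamp_in x) eps He) as [d [Hd H]].
  exists d; split; [lra|].
  intros y [_ Hy]; simpl in *; unfold R_dist in *.
  apply H; [apply clamp_in|]. pose proof (clamp_lipschitz x y); lra.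
Qed.

Lemma taylor_ext_flat g x :
  taylor_ext g (fun _ => 0) (fun _ => 0) (fun _ => 0) x = g (clamp x).
Proof.
  unfold taylor_ext, ext, poly_tail, clamp, Rmax, Rmin.
  repeat destruct (Rlt_dec _ _); repeat destruct (Rle_dec _ _);
    try (f_equal; lra); try lra; ring_simplify; f_equal; lra.
Qed.

Lemma trapezoid_remainder P Q p2 p3 :
  deriv_on01 P Q -> deriv_on01 Q p2 -> deriv_on01 p2 p3 -> cont_on01 p3 ->
  forall pr : Riemann_integrable (fun s => s * (1 - s) * p3 s) 0 1,
  P 1 - P 0 = / 2 * (Q 0 + Q 1) - / 2 * RiemannInt pr.
Proof.
  intros hP hQ h2 h3 pr.
  (* Taylor extensions turn P, Q, p2 into a derivative chain on all of R. *)
  set (zero := fun _ : R => 0).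
  set (E0 := taylor_ext P Q p2 p3).
  set (E1 := taylor_ext Q p2 p3 zero).
  set (E2 := taylor_ext p2 p3 zero zero).
  (* The p2- and Q-terms cancel in G', leaving s (1 - s) p3. *)
  set (G := fun s => s * (1 - s) * E2 s - (1 - 2 * s) * E1 s - 2 * E0 s).
  set (g := fun s => s * (1 - s) * p3 (clamp s)).
  assert (D0 : forall x, is_derive E0 x (E1 x))
    by (intro; apply is_derive_Reals, taylor_ext_deriv, hP).
  assert (D1 : forall x, is_derive E1 x (E2 x))
    by (intro; apply is_derive_Reals, taylor_ext_deriv, hQ).
  assert (D2 : forall x, is_derive E2 x (p3 (clamp x))).
  { intro x; rewrite <- taylor_ext_flat; apply is_derive_Reals, taylor_ext_deriv, h2. }
  assert (DG : forall x, is_derive G x (g x)).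
  { intro x; unfold G, g; auto_derive.
    - repeat split; eexists; eauto.
    - replace (Derive (fun t => E0 t) x) with (E1 x) by (symmetry; now apply is_derive_unique).
      replace (Derive (fun t => E1 t) x) with (E2 x) by (symmetry; now apply is_derive_unique).
      replace (Derive (fun t => E2 t) x) with (p3 (clamp x))
        by (symmetry; now apply is_derive_unique).
      ring. }
  assert (Cg : forall x, continuous g x).
  { intro x; apply continuity_pt_filterlim.
    apply (continuity_pt_mult (fun s => s * (1 - s)) (fun s => p3 (clamp s))).
    - reg.
    - now apply clamp_continuous. }
  assert (FTC : RInt g 0 1 = G 1 - G 0).
  { apply is_RInt_unique, (is_RInt_derive G g); intros; [apply DG|apply Cg]. }
  (* On (0,1) the integrand g coincides with s (1 - s) p3 s. *)
  rewrite <- (RInt_Reals _ _ _ pr), (RInt_ext _ g), FTC.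
  - unfold G, E0, E1, E2; rewrite !taylor_ext_01 by lra; field.
  - intros x Hx; rewrite Rmin_left, Rmax_right in Hx by lra.
    unfold g, clamp; rewrite Rmin_right, Rmax_right by lra; easy.
Qed.

Section VectorSpace.
Context {V : HilbertSpace}.

Lemma vadd_0r (x : V) : vadd x vzero = x.
Proof. rewrite vadd_comm; apply vadd_0l. Qed.

Lemma vscal_0 (x : V) : vscal 0 x = vzero.
Proof.
  assert (Hdup : vadd (vscal 0 x) (vscal 0 x) = vscal 0 x)
    by (rewrite <- vscal_addl; f_equal; ring).
  assert (Hcancel : vadd (vadd (vscal 0 x) (vscal 0 x)) (vopp (vscal 0 x)) = vzero)
    by (rewrite Hdup; apply vadd_oppr).
  now rewrite <- vadd_assoc, vadd_oppr, vadd_0r in Hcancel.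
Qed.

Lemma segment_at0 (x y : V) : vadd x (vscal 0 (vsub y x)) = x.
Proof. now rewrite vscal_0, vadd_0r. Qed.

Lemma segment_at1 (x y : V) : vadd x (vscal 1 (vsub y x)) = y.
Proof.
  unfold vsub; rewrite vscal_1, (vadd_comm _ y), vadd_assoc, vadd_oppr; apply vadd_0l.
Qed.

Lemma lin_sub (g : V -> R) : is_linear g -> forall x y, g (vsub x y) = g x - g y.
Proof.
  intros [Hadd _] x y.
  assert (Hzero : g vzero = 0)
    by (pose proof (Hadd vzero vzero) as H; rewrite vadd_0l in H; lra).
  pose proof (Hadd y (vopp y)) as Hopp; rewrite vadd_oppr, Hzero in Hopp.
  unfold vsub; rewrite Hadd; lra.
Qed.

End VectorSpace.

Section Residuals.
Context {V : HilbertSpace}.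
Variables (a ad : V -> V -> R) (a' ad' : V -> V -> V -> R)
          (f j : V -> R) (j' : V -> V -> R).

Lemma Lfun_at_state (u z : V) :
  (forall v, a u v + ad u v = f v) -> Lfun j f a ad u z = j u.
Proof. intros hu; unfold Lfun; specialize (hu z); lra. Qed.

Lemma Lprime_at_stationary (u z w v : V) :
  (forall v, a u v + ad u v = f v) -> (forall w, a' u w z + ad' u w z = j' u w) ->
  Lprime j' f a ad a' ad' u z w v = 0.
Proof. intros hu hz; unfold Lprime; specialize (hu v); specialize (hz w); lra. Qed.

Lemma Lprime_residuals (uh zh w v : V) :
  Lprime j' f a ad a' ad' uh zh w v =
    rhostar j' a' uh zh w + rho f a uh v - (ad uh v + ad' uh w zh).
Proof. unfold Lprime, rho, rhostar; ring. Qed.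

Lemma rho_sub (uh x y : V) : is_linear f -> is_linear (a uh) ->
  rho f a uh (vsub x y) = rho f a uh x - rho f a uh y.
Proof. intros hf ha; unfold rho; rewrite (lin_sub f hf), (lin_sub _ ha); ring. Qed.

Lemma rhostar_sub (uh zh x y : V) :
  is_linear (j' uh) -> is_linear (fun w => a' uh w zh) ->
  rhostar j' a' uh zh (vsub x y) = rhostar j' a' uh zh x - rhostar j' a' uh zh y.
Proof.
  intros hj ha; unfold rhostar.
  rewrite (lin_sub _ hj), (lin_sub (fun w => a' uh w zh) ha); ring.
Qed.

Lemma rhostar_galerkin (VT : V -> Prop) (uh zh w : V) :
  (forall w, VT w -> a' uh w zh = j' uh w) -> VT w -> rhostar j' a' uh zh w = 0.
Proof. intros hzh Hw; unfold rhostar; rewrite hzh by exact Hw; ring. Qed.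

End Residuals.

Theorem mainTheorem1
  (V : HilbertSpace) (VT : V -> Prop) (hVT : fin_dim_subspace VT)
  (a ad : V -> V -> R) (a' ad' : V -> V -> V -> R)
  (f : V -> R) (j : V -> R) (j' : V -> V -> R)
  (aT : V -> V -> R) (fT : V -> R)
  (ha_lin : forall u, is_linear (a u)) (had_lin : forall u, is_linear (ad u))
  (hf : in_dual f)
  (haT_lin : forall u, VT u -> is_linear_on VT (aT u))
  (hfT : is_linear_on VT fT)
  (ha' : forall u w v, gateaux (fun y => a y v) u w (a' u w v))
  (had' : forall u w v, gateaux (fun y => ad y v) u w (ad' u w v))
  (hj' : forall u w, gateaux j u w (j' u w))
  (ha'_lin : forall u, (forall v, is_linear (fun w => a' u w v)) /\
                       (forall w, is_linear (a' u w)))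
  (had'_lin : forall u, (forall v, is_linear (fun w => ad' u w v)) /\
                        (forall w, is_linear (ad' u w)))
  (hj'_lin : forall u, is_linear (j' u))
  (u z : V)
  (hu : forall v, a u v + ad u v = f v)
  (hz : forall w, a' u w z + ad' u w z = j' u w)
  (uTm zTm : V) (huTmT : VT uTm) (hzTmT : VT zTm)
  (huTm : forall v, VT v -> aT uTm v = fT v)
  (hzTm : forall w, VT w -> a' uTm w zTm = j' uTm w)
  (iT : V -> V) (hiT : forall v, VT (iT v))
  (phi2 phi3 : R -> R)
  (hphi1 : deriv_on01
     (fun s => Lfun j f a ad (vadd uTm (vscal s (vsub u uTm)))
                             (vadd zTm (vscal s (vsub z zTm))))
     (fun s => Lprime j' f a ad a' ad' (vadd uTm (vscal s (vsub u uTm)))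
                             (vadd zTm (vscal s (vsub z zTm)))
                             (vsub u uTm) (vsub z zTm)))
  (hphi2 : deriv_on01
     (fun s => Lprime j' f a ad a' ad' (vadd uTm (vscal s (vsub u uTm)))
                             (vadd zTm (vscal s (vsub z zTm)))
                             (vsub u uTm) (vsub z zTm)) phi2)
  (hphi3 : deriv_on01 phi2 phi3)
  (hphi3c : cont_on01 phi3)
  (pr : Riemann_integrable (fun s => s * (1 - s) * phi3 s) 0 1) :
  j u - j uTm =
    - ad uTm zTm
    + f zTm - fT zTm - a uTm zTm + aT uTm zTm
    + / 2 * (rho f a uTm (vsub z (iT z)) + rhostar j' a' uTm zTm (vsub u (iT u)))
    - / 2 * (ad uTm (vsub z zTm) + ad' uTm (vsub u uTm) zTm)
    - / 2 * rho f a uTm (vsub zTm (iT z))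
    - / 2 * RiemannInt pr.
Proof.
  (* Trapezoidal rule along the segment s |-> x_Tm + s e. *)
  pose proof (trapezoid_remainder _ _ _ _ hphi1 hphi2 hphi3 hphi3c pr) as T.
  cbv beta in T; rewrite !segment_at0, !segment_at1 in T.
  (* At x the derivative L'(x; e) vanishes; at x_Tm it splits into residuals. *)
  rewrite (Lfun_at_state _ _ _ _ _ _ hu),
    (Lprime_at_stationary _ _ _ _ _ _ _ _ _ _ hu hz), Lprime_residuals in T.
  (* The interpolants enter by linearity and Galerkin orthogonality. *)
  destruct hf as [hf_lin _]; destruct (ha'_lin uTm) as [ha'_zTm _].
  assert (Hrho : rho f a uTm (vsub z (iT z)) - rho f a uTm (vsub zTm (iT z))
                 = rho f a uTm (vsub z zTm))
    by (rewrite !rho_sub by auto; ring).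
  assert (Hrhostar : rhostar j' a' uTm zTm (vsub u (iT u))
                     = rhostar j' a' uTm zTm (vsub u uTm)).
  { rewrite !rhostar_sub by auto.
    rewrite (rhostar_galerkin _ _ VT _ _ _ hzTm (hiT u)),
            (rhostar_galerkin _ _ VT _ _ _ hzTm huTmT); ring. }
  pose proof (huTm zTm hzTmT).
  unfold Lfun in T; lra.
Qed.
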